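(* Let $(\mathcal{P},d)$ be a 1-2-metric and $\alpha>0$. A strategy profile of the greedy-routing network creation game on $(\mathcal{P},d)$ with edge price $\alpha$ is a Nash equilibrium if and only if its network is a Balanced Domination Set Graph for $\alpha$ (BDSG$(\alpha)$).
   Context: A 1-2-metric is a finite metric space $(\mathcal{P},d)$ with $d(u,v)\in\{1,2\}$ for all distinct $u,v$. Game: agents are the points of $\mathcal{P}$; agent $u$'s strategy is $S_u\subseteq\mathcal{P}\setminus\{u\}$; a profile $\mathbf{s}$ defines the directed network $G(\mathbf{s})$ with arcs $(u,v)$, $v\in S_u$, of length $d(u,v)$. A greedy path from $u$ to $v$ is a directed path $u=x_1,\dots,x_j=v$ of arcs with $d(x_i,v)>d(x_{i+1},v)$ for all $i$. $\mathrm{stretch}(u,v)$ is the minimum length of a greedy path from $u$ to $v$ divided by $d(u,v)$, or a fixed sufficiently large penalty constant $Z$ if none exists. Cost: $c_u(\mathbf{s})=\sum_{v\ne u}\mathrm{stretch}_{G(\mathbf{s})}(u,v)+\alpha|S_u|$. A Nash equilibrium is a profile in which no agent can strictly decrease its cost by changing its own strategy. Notation for a directed network $G$ on $\mathcal{P}$ and node $u$: $N(u)$ is the set of out-neighbours of $u$; $W_2(u)=\{v\in N(u):d(u,v)=2\}$; $W_{1\to1}(u)$ is the set of nodes $w\ne u$ such that there is $v$ with $d(u,v)=d(v,w)=1$ and $(u,v),(v,w)$ arcs of $G$; $W_2^+(u)=W_2(u)\cap W_{1\to1}(u)$. $G^1_{-u}$ is the directed graph on $\mathcal{P}\setminus\{u\}$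 with arc $(v,w)$ for every pair with $d(v,w)=1$. A vertex set $D$ of a directed graph $H$ is dominating if every vertex of $H$ outside $D$ has an in-neighbour in $D$. A Domination Set Graph (DSG) is a directed network $G$ on $\mathcal{P}$ such that (i) $G$ contains every arc $(v,w)$ with $d(v,w)=1$; (ii) for every $u$, $N(u)$ is dominating in $G^1_{-u}$; (iii) for every $u$ there is no set $N'\subseteq\mathcal{P}\setminus\{u\}$ obtained from $N(u)$ by deleting one element or replacing one element by another, such that $N'$ contains all $v$ with $d(u,v)=1$, $N'$ is dominating in $G^1_{-u}$, and $|\{v\in N':d(u,v)=2\}\cap W_{1\to1}(u)|<|W_2^+(u)|$. A BDSG$(\alpha)$ is a DSG in which, for every node $u$, the quantity $(\alpha-\tfrac12)|W_2(u)|+\tfrac12|W_2^+(u)|$ is minimum among all choices of an out-neighbourhood $N'\subseteq\mathcal{P}\setminus\{u\}$ of $u$ (all other arcs unchanged) that contain every $v$ with $d(u,v)=1$ and are dominating in $G^1_{-u}$ (the sets $W_2,W_2^+$ being computed with respect to $N'$). *)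

From mathcomp Require Import all_boot all_order all_algebra.
Set Implicit Arguments. Unset Strict Implicit. Unset Printing Implicit Defensive.
Import Order.TTheory GRing.Theory Num.Theory.

Section Defs.
Variable T : finType.
Variable d : T -> T -> nat.

Definition one_two_metric : Prop :=
  [/\ forall u, d u u = 0,
      forall u v, d u v = d v u,
      forall u v w, d u w <= d u v + d v w
    & forall u v, u != v -> (d u v == 1) || (d u v == 2)].

(** A network is given by out-neighbourhoods: arc (u,v) iff v \in N u. *)
(** Greedy path from u to v given as the list of nodes after u. *)
Definition greedy_path (N : T -> {set T}) (u v : T) (p : seq T) : bool :=
  path (fun x y => (y \in N x) && (d y v < d x v)) u p && (last u p == v).

Definition path_len (u : T) (p : seq T) : nat := sumn (pairmap d u p).

(** Greedy paths visit pairwise distinct nodes (distance to v strictly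
    decreases), hence have fewer than #|T| arcs; we quantify over them. *)
Definition has_greedy_len (N : T -> {set T}) (u v : T) (l : nat) : bool :=
  [exists k : 'I_#|T|.+1, [exists t : k.-tuple T,
     greedy_path N u v t && (path_len u t == l)]].

(** ascending list of lengths of greedy paths (each arc has length <= 2) *)
Definition greedy_lengths (N : T -> {set T}) (u v : T) : seq nat :=
  [seq l <- iota 0 (2 * #|T|).+1 | has_greedy_len N u v l].

Variable R : realFieldType.

Definition stretch (Z : R) (N : T -> {set T}) (u v : T) : R :=
  match greedy_lengths N u v with
  | [::] => Z
  | l :: _ => (l%:R / (d u v)%:R)%R
  end.

Definition cost (alpha Z : R) (s : T -> {set T}) (u : T) : R :=
  ((\sum_(v | v != u) stretch Z s u v) + alpha * (#|s u|)%:R)%R.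

Definition update (s : T -> {set T}) (u : T) (S : {set T}) : T -> {set T} :=
  fun w => if w == u then S else s w.

Definition is_profile (s : T -> {set T}) : Prop := forall u, u \notin s u.

Definition nash_eq (alpha Z : R) (s : T -> {set T}) : Prop :=
  forall u (S : {set T}), u \notin S ->
    (cost alpha Z s u <= cost alpha Z (update s u S) u)%R.

Definition W2 (N : T -> {set T}) (u : T) : {set T} :=
  [set v in N u | d u v == 2].

Definition W11 (N : T -> {set T}) (u : T) : {set T} :=
  [set w | (w != u) &&
     [exists v, [&& d u v == 1, d v w == 1, v \in N u & w \in N v]]].

Definition W2plus (N : T -> {set T}) (u : T) : {set T} := W2 N u :&: W11 N u.

Definition dominating_minus (u : T) (D : {set T}) : bool :=
  [forall w, ((w != u) && (w \notin D)) ==>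
     [exists v, [&& v \in D, v != u & d v w == 1]]].

Definition admissible (u : T) (N' : {set T}) : bool :=
  [&& u \notin N', [forall v, (d u v == 1) ==> (v \in N')] & dominating_minus u N'].

Definition one_change (A N' : {set T}) : Prop :=
  exists2 x, x \in A & (N' = A :\ x \/ exists y, N' = y |: (A :\ x)).

Definition DSG (N : T -> {set T}) : Prop :=
  [/\ forall v w, d v w = 1 -> w \in N v,
      forall u, dominating_minus u (N u)
    & forall u (N' : {set T}), one_change (N u) N' -> admissible u N' ->
        ~ (#|[set v in N' | d u v == 2] :&: W11 N u| < #|W2plus N u|)%N].

Definition balance (alpha : R) (N : T -> {set T}) (u : T) : R :=
  ((alpha - 2^-1) * (#|W2 N u|)%:R + 2^-1 * (#|W2plus N u|)%:R)%R.

Definition BDSG (alpha : R) (N : T -> {set T}) : Prop :=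
  DSG N /\
  forall u (N' : {set T}), admissible u N' ->
    (balance alpha N u <= balance alpha (update N u N') u)%R.

End Defs.

(* In a 1-2-metric a greedy path has at most two arcs, so the stretch of a
   target is 1 if it is bought or reached by two unit arcs, 3/2 if it is only
   reached by a detour of length 3, and the penalty Z otherwise.  Once Z exceeds
   the cost of every strategy that buys all unit arcs and dominates G^1_{-u},
   Nash equilibria buy all unit arcs and use dominating out-neighbourhoods, and
   for such strategies the cost of u is a constant fixed by the metric plus the
   balance (alpha - 1/2)|W_2(u)| + 1/2 |W_2^+(u)|.  So best responses are the
   balance minimisers, and balance minimality implies condition (iii) of a DSG. *)

From mathcomp Require Import all_boot all_order all_algebra.
From mathcomp Require Import zify ring lra.
Import Order.TTheory GRing.Theory Num.Theory.
Set Implicit Arguments. Unset Strict Implicit.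

Lemma filter_iota_min (P : pred nat) m n : m < n -> P m -> (forall l, l < m -> ~~ P l) ->
  [seq l <- iota 0 n | P l] = m :: [seq l <- iota m.+1 (n - m.+1) | P l].
Proof.
move=> mn Pm below_m; have -> : n = m + (1 + (n - m.+1)) by lia.
rewrite iotaD filter_cat iotaD /= Pm.
have -> : [seq l <- iota 0 m | P l] = [::].
  apply/eqP; rewrite -[_ == _]negbK -has_filter; apply/hasPn => l.
  by rewrite mem_iota add0n => /andP[_ /below_m].
by rewrite /= add0n addn1; congr (_ :: _); congr (filter _ (iota _ _)); lia.
Qed.

Lemma card_ge2 (T : finType) (u v : T) : u != v -> 2 <= #|T|.
Proof. by move=> uv; have := max_card [set u; v]; rewrite cards2 uv. Qed.

Lemma one_change_card (T : finType) (A N' : {set T}) : one_change A N' ->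
  #|A| <= #|N'|.+1 /\ #|N'| <= #|A|.
Proof.
case=> x xA [->|[y ->]]; rewrite (cardsD1 x A) xA; first by lia.
by rewrite cardsU1; case: (y \in A :\ x) => /=; lia.
Qed.

Section OneTwoMetric.
Variables (T : finType) (d : T -> T -> nat).
Hypothesis metric_d : one_two_metric d.

Lemma dist_xx u : d u u = 0. Proof. by case: metric_d. Qed.

Lemma dist_neq u v : u != v -> d u v = 1 \/ d u v = 2.
Proof. by case: metric_d => _ _ _ H /H /orP[/eqP|/eqP]; auto. Qed.

Lemma dist_le2 u v : d u v <= 2.
Proof. by case: (eqVneq u v) => [->|/dist_neq [] ->] //; rewrite dist_xx. Qed.

Lemma dist_eq0 u v : d u v = 0 -> u = v.
Proof. by case: (eqVneq u v) => // /dist_neq [] ->. Qed.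

Lemma path_len_arc u v : path_len d u [:: v] = d u v.
Proof. by rewrite /path_len /= addn0. Qed.

Lemma path_len_hops u x v : path_len d u [:: x; v] = d u x + d x v.
Proof. by rewrite /path_len /= addn0. Qed.

(* Distances to the target drop strictly inside {0, 1, 2}. *)
Lemma greedy_path_shape N u v p : greedy_path d N u v p ->
  [\/ p = [::] /\ u = v,
      p = [:: v] /\ v \in N u
    | exists x, [/\ p = [:: x; v], x \in N u, v \in N x, d x v = 1 & d u v = 2]].
Proof.
rewrite /greedy_path; case: p => [|x [|y [|z q]]] /=.
- by move=> /eqP ->; constructor 1.
- by rewrite andbT => /andP[/andP[xN _] /eqP <-]; constructor 2.
- rewrite andbT => /andP[/andP[/andP[xN hx] /andP[yN hy]] /eqP yv]; subst y.
  rewrite dist_xx in hy; have := dist_le2 u v.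
  by constructor 3; exists x; split => //; lia.
- move=> /andP[/andP[/andP[_ hx] /andP[/andP[_ hy] /andP[/andP[_ hz] _]]] _].
  by have := dist_le2 u v; lia.
Qed.

Lemma greedy_path_len_ge N u v q :
  greedy_path d N u v q -> u != v -> d u v <= path_len d u q.
Proof.
move=> /greedy_path_shape [[-> e]|[-> _]|[x [-> _ _ h1 h2]]] uv.
- by rewrite e eqxx in uv.
- by rewrite path_len_arc.
- rewrite path_len_hops h1 h2; case: (eqVneq u x) => [ex|ux].
    by rewrite -ex h2 in h1.
  by case: (dist_neq ux) => ->; lia.
Qed.

Variable R : realFieldType.
Implicit Types (Z : R) (N : T -> {set T}).

Lemma stretch_shortest Z N u v p : u != v -> greedy_path d N u v p ->
  (forall q, greedy_path d N u v q -> path_len d u p <= path_len d u q) ->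
  stretch d Z N u v = ((path_len d u p)%:R / (d u v)%:R)%R.
Proof.
move=> uv gp shortest; pose n := #|T|; have T2 : 1 < n := card_ge2 uv.
have [sz plen] : size p <= n /\ path_len d u p <= 4.
  case/greedy_path_shape: (gp) => [[-> _]|[-> _]|[x [-> _ _ xv _]]];
    rewrite ?path_len_arc ?path_len_hops /=; have := dist_le2 u v.
  - by rewrite /path_len /=; lia.
  - by lia.
  - by rewrite xv; have := dist_le2 u x; lia.
have hP : has_greedy_len d N u v (path_len d u p).
  apply/existsP; exists (Ordinal (n := n.+1) (m := size p) sz).
  by apply/existsP; exists (in_tuple p); rewrite /= gp eqxx.
have below : forall l, l < path_len d u p -> ~~ has_greedy_len d N u v l.
  move=> l lt; apply/negP => /existsP[k /existsP[t /andP[g /eqP tl]]].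
  by have := shortest _ g; lia.
have lt : path_len d u p < (2 * n).+1 by lia.
by rewrite /stretch /greedy_lengths (filter_iota_min lt hP below).
Qed.

Lemma stretch_unreachable Z N u v : (forall q, ~~ greedy_path d N u v q) ->
  stretch d Z N u v = Z.
Proof.
move=> none; rewrite /stretch /greedy_lengths.
have -> // : [seq l <- iota 0 (2 * #|T|).+1 | has_greedy_len d N u v l] = [::].
apply/eqP; rewrite -[_ == _]negbK -has_filter; apply/hasPn => l _.
by apply/negP => /existsP[k /existsP[t /andP[g _]]]; move: (none t); rewrite g.
Qed.

Lemma stretch_arc Z N u v : u != v -> v \in N u -> stretch d Z N u v = 1%R.
Proof.
move=> uv vN; have dn0 : d u v != 0 by apply: contra_neq uv => /dist_eq0.
rewrite (@stretch_shortest Z N u v [:: v]) // ?path_len_arc.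
- by rewrite divff // pnatr_eq0.
- by rewrite /greedy_path /= vN dist_xx eqxx /= !andbT lt0n.
- by move=> q /greedy_path_len_ge; apply.
Qed.

Lemma stretch_unit_hops Z N u x v : u != v -> d u v = 2 -> x \in N u ->
  d u x = 1 -> d x v = 1 -> v \in N x -> stretch d Z N u v = 1%R.
Proof.
move=> uv h2 xN h1 hx vN.
rewrite (@stretch_shortest Z N u v [:: x; v]) // ?path_len_hops.
- by rewrite h1 hx h2 divff // pnatr_eq0.
- by rewrite /greedy_path /= xN vN hx h2 dist_xx /= eqxx.
- by move=> q /greedy_path_len_ge; rewrite h1 hx h2; apply.
Qed.

Lemma stretch_detour Z N u x v : u != v -> d u v = 2 -> v \notin N u ->
  x \in N u -> d x v = 1 -> v \in N x ->
  (forall y, y \in N u -> d y v = 1 -> v \in N y -> d u y = 2) ->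
  stretch d Z N u v = (3%:R / 2%:R)%R.
Proof.
move=> uv h2 vN xN hx vx via_far.
rewrite (@stretch_shortest Z N u v [:: x; v]) // ?path_len_hops.
- by rewrite (via_far x) // hx h2.
- by rewrite /greedy_path /= xN vx hx h2 dist_xx /= eqxx.
- move=> q /greedy_path_shape [[_ e]|[_ vN']|[y [-> yN vy hy _]]].
  + by rewrite e eqxx in uv.
  + by rewrite vN' in vN.
  + by rewrite !path_len_hops (via_far x) // (via_far y) // hx hy.
Qed.

Lemma stretch_missing_unit_arc Z N u v : d u v = 1 -> v \notin N u ->
  stretch d Z N u v = Z.
Proof.
move=> h1 vN; apply: stretch_unreachable => q; apply/negP.
case/greedy_path_shape => [[_ e]|[_ vN']|[y [_ _ _ _ h2]]].
- by rewrite e dist_xx in h1.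
- by rewrite vN' in vN.
- by rewrite h2 in h1.
Qed.

Lemma stretch_no_unit_hop Z N u v : d u v = 2 -> v \notin N u ->
  (forall x, x \in N u -> d x v = 1 -> v \notin N x) -> stretch d Z N u v = Z.
Proof.
move=> h2 vN no_hop; apply: stretch_unreachable => q; apply/negP.
case/greedy_path_shape => [[_ e]|[_ vN']|[y [_ yN vy hy _]]].
- by rewrite e dist_xx in h2.
- by rewrite vN' in vN.
- by move: (no_hop y yN hy); rewrite vy.
Qed.

Lemma stretch_ge0 Z N u v : (0 <= Z)%R -> (0 <= stretch d Z N u v)%R.
Proof.
by move=> Z0; rewrite /stretch; case: greedy_lengths => [|l _] //; rewrite divr_ge0.
Qed.

End OneTwoMetric.

Section AdmissibleCost.
Variables (T : finType) (d : T -> T -> nat).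
Hypothesis metric_d : one_two_metric d.
Variable R : realFieldType.
Implicit Types (Z alpha : R) (N : T -> {set T}) (u v : T).

Definition two_unit_hops (u : T) : {set T} :=
  [set w | (w != u) && [exists y, (d u y == 1) && (d y w == 1)]].

Definition far_targets (u : T) : {set T} :=
  [set v | (d u v == 2) && (v \notin two_unit_hops u)].

Definition unit_sphere (u : T) : {set T} := [set v | d u v == 1].

Definition unit_arcs_off N (u : T) :=
  forall x w, x != u -> d x w = 1 -> w \in N x.

Lemma unit_arcs_off_update (s : T -> {set T}) u S :
  (forall x w, d x w = 1 -> w \in s x) -> unit_arcs_off (update s u S) u.
Proof. by move=> unit_s x w xu h; rewrite /update (negbTE xu); apply: unit_s. Qed.

Lemma admissible_inv u (N' : {set T}) : admissible d u N' ->
  [/\ u \notin N', forall v, d u v = 1 -> v \in N' &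
      forall w, w != u -> w \notin N' -> exists v, [/\ v \in N', v != u & d v w = 1]].
Proof.
move=> /and3P[uN /forallP unit_in /forallP dom]; split => //.
- by move=> v hv; move: (unit_in v); rewrite hv eqxx.
- move=> w wu wN; move: (dom w); rewrite wu wN /= => /existsP[v /and3P[vN vu /eqP h]].
  by exists v.
Qed.

Lemma not_admissible u (N' : {set T}) : u \notin N' -> ~~ admissible d u N' ->
  (exists v, d u v = 1 /\ v \notin N') \/
  (exists w, [/\ w != u, w \notin N' & forall v, v \in N' -> v != u -> d v w <> 1]).
Proof.
rewrite /admissible => -> /=; case/nandP.
- by move=> /forallPn[v]; rewrite negb_imply => /andP[/eqP h vN]; left; exists v.
- move=> /forallPn[w]; rewrite negb_imply => /andP[/andP[wu wN] /existsPn dom]; right.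
  by exists w; split => // v vN vu h; move: (dom v); rewrite vN vu h eqxx.
Qed.

Lemma W11_two_unit_hops N u : unit_arcs_off N u ->
  (forall v, d u v = 1 -> v \in N u) -> W11 d N u = two_unit_hops u.
Proof.
move=> unit_off unit_u; apply/setP => w; rewrite !inE; congr (_ && _).
apply/existsP/existsP => [[y /and4P[hy hw _ _]]|[y /andP[hy hw]]]; exists y.
- by rewrite hy hw.
- have yu : y != u by apply: contraTneq hy => ->; rewrite (dist_xx metric_d).
  by rewrite hy hw /= unit_u ?(eqP hy) //= unit_off ?(eqP hw).
Qed.

(* A far target that is not bought is reached through its dominator, which
   lies at distance 2 from u because v is not two unit hops away. *)
Lemma stretch_admissible Z N u v : unit_arcs_off N u -> admissible d u (N u) ->
  u != v -> stretch d Z N u v = (1 + 2^-1 * (v \in far_targets u :\: N u)%:R)%R.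
Proof.
move=> unit_off /admissible_inv [uN unit_u dom] uv.
case: (dist_neq metric_d uv) => h.
  by rewrite (stretch_arc metric_d Z uv (unit_u v h)) !inE h /= andbF mulr0 addr0.
case vN : (v \in N u).
  by rewrite (stretch_arc metric_d) // !inE vN /= mulr0 addr0.
case vW : (v \in two_unit_hops u).
  move: (vW); rewrite inE => /andP[_ /existsP[y /andP[/eqP hy /eqP hyv]]].
  have yu : y != u by apply: contra_eq_neq hy => ->; rewrite (dist_xx metric_d).
  rewrite (stretch_unit_hops metric_d Z uv h (unit_u y hy) hy hyv (unit_off y v yu hyv)).
  by rewrite in_setD [_ \in far_targets u]inE vW vN /= andbF mulr0 addr0.
have vu : v != u by rewrite eq_sym.
have [x [xN xu hx]] := dom v vu (negbT vN).
rewrite (stretch_detour metric_d Z uv h (negbT vN) xN hx (unit_off x v xu hx)).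
- by rewrite in_setD [_ \in far_targets u]inE vW vN h eqxx /= mulr1; lra.
- move=> y yN hy _; have uy : u != y by apply: contraNneq uN => e; rewrite {1}e.
  case: (dist_neq metric_d uy) => // hy1; move/negP: vW; case.
  by rewrite inE vu /=; apply/existsP; exists y; rewrite hy1 hy eqxx.
Qed.

Lemma sumr_indicator (X : {set T}) u : u \notin X ->
  (\sum_(v | v != u) ((v \in X)%:R : R) = #|X|%:R)%R.
Proof.
move=> uX; rewrite (bigID (mem X)) /= [X in (_ + X)%R]big1 ?addr0; last first.
  by move=> v /andP[_ /negbTE ->].
rewrite -sumr_const; apply: eq_big => [v|v /andP[_ ->]] //.
by case: (eqVneq v u) => [->|] /=; rewrite ?(negbTE uX) ?andbT.
Qed.

Lemma sumr1_neq u : (\sum_(v | v != u) (1 : R) = (#|T|.-1)%:R)%R.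
Proof. by rewrite -(cardC1 u) -sumr_const; apply: eq_bigl => v; rewrite inE. Qed.

Lemma card_admissible (N' : {set T}) u : admissible d u N' ->
  #|N'| = #|unit_sphere u| + #|[set v in N' | d u v == 2]|.
Proof.
move=> /admissible_inv[uN unit_in _]; rewrite -(cardsID (unit_sphere u) N').
have -> : N' :&: unit_sphere u = unit_sphere u.
  apply/setP => v; rewrite !inE.
  by case h: (d u v == 1); rewrite ?andbF ?andbT // unit_in ?(eqP h).
congr (_ + _); apply: eq_card => v; rewrite !inE.
case: (eqVneq v u) => [->|vu]; first by rewrite (negbTE uN) andbF.
by rewrite eq_sym in vu; case: (dist_neq metric_d vu) => ->; rewrite /= andbC.
Qed.

Lemma card_far_W2 N u : unit_arcs_off N u -> (forall v, d u v = 1 -> v \in N u) ->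
  #|far_targets u :\: N u| + #|W2 d N u| = #|far_targets u| + #|W2plus d N u|.
Proof.
move=> unit_off unit_u; rewrite /W2plus (W11_two_unit_hops unit_off unit_u).
rewrite -(cardsID (N u) (far_targets u)) -(cardsID (two_unit_hops u) (W2 d N u)).
have -> : far_targets u :&: N u = W2 d N u :\: two_unit_hops u.
  apply/setP => v; rewrite !inE.
  by case: (d u v == 2); case: (v \in N u); rewrite /= ?andbF ?andbT.
lia.
Qed.

Lemma cost_admissible alpha Z N u : unit_arcs_off N u -> admissible d u (N u) ->
  cost d alpha Z N u = ((#|T|.-1)%:R + 2^-1 * #|far_targets u|%:R
     + alpha * #|unit_sphere u|%:R + balance d alpha N u)%R.
Proof.
move=> unit_off adm; have [uN unit_u _] := admissible_inv adm.
rewrite /cost (eq_bigr (fun v => 1 + 2^-1 * (v \in far_targets u :\: N u)%:R)%R);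
  last by move=> v vu; rewrite stretch_admissible // eq_sym.
rewrite big_split /= -mulr_sumr sumr1_neq sumr_indicator;
  last by rewrite !inE (dist_xx metric_d) /= andbF.
have := card_far_W2 unit_off unit_u => /(congr1 (fun n => (n%:R : R)%R)); rewrite !natrD.
move=> /(canRL (addrK _)) ->; rewrite (card_admissible adm) /balance /W2 natrD; ring.
Qed.

Lemma inadmissible_penalty Z N u : unit_arcs_off N u -> u \notin N u ->
  ~~ admissible d u (N u) -> exists2 v, v != u & stretch d Z N u v = Z.
Proof.
move=> unit_off uN /(not_admissible uN) [[v [h vN]]|[w [wu wN undominated]]].
  exists v; first by apply: contra_eq_neq h => ->; rewrite (dist_xx metric_d).
  exact: (stretch_missing_unit_arc metric_d).
exists w => //; have uw : u != w by rewrite eq_sym.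
case: (dist_neq metric_d uw) => h; first exact: (stretch_missing_unit_arc metric_d).
apply: (stretch_no_unit_hop metric_d) => // x xN hx; exfalso.
by apply: (undominated x xN) => //; apply: contraNneq uN => e; rewrite -{1}e.
Qed.

Lemma penalty_le_cost alpha Z N u v : (0 <= Z)%R -> (0 <= alpha)%R ->
  v != u -> stretch d Z N u v = Z -> (Z <= cost d alpha Z N u)%R.
Proof.
move=> Z0 a0 vu e; rewrite /cost (bigD1 v) //= e.
have : (0 <= \sum_(i | (i != u) && (i != v)) stretch d Z N u i)%R.
  by apply: sumr_ge0 => i _; apply: stretch_ge0.
have : (0 <= alpha * (#|N u|)%:R)%R by rewrite mulr_ge0.
lra.
Qed.

Lemma cost_admissible_le alpha Z N u : (0 <= alpha)%R -> unit_arcs_off N u ->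
  admissible d u (N u) -> (cost d alpha Z N u <= 2 * #|T|%:R + alpha * #|T|%:R)%R.
Proof.
move=> a0 unit_off adm; rewrite /cost.
have : (\sum_(v | v != u) stretch d Z N u v <= 2 * (#|T|.-1)%:R)%R.
  rewrite -(sumr1_neq u) mulr_sumr; apply: ler_sum => v vu.
  rewrite stretch_admissible // 1?eq_sym //.
  by case: (_ \in _); rewrite /= ?mulr1 ?mulr0; lra.
have : ((#|T|.-1)%:R <= #|T|%:R :> R)%R by rewrite ler_nat leq_pred.
have : (alpha * #|N u|%:R <= alpha * #|T|%:R)%R by rewrite ler_wpM2l // ler_nat max_card.
lra.
Qed.

Lemma cost_complete_le alpha Z (s : T -> {set T}) u : (0 <= alpha)%R ->
  (cost d alpha Z (update s u [set v | v != u]) u <= #|T|%:R + alpha * #|T|%:R)%R.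
Proof.
move=> a0; rewrite /cost.
have : (\sum_(v | v != u) stretch d Z (update s u [set v | v != u]) u v
          <= (#|T|.-1)%:R)%R.
  rewrite -(sumr1_neq u); apply: ler_sum => v vu.
  by rewrite (stretch_arc metric_d) 1?eq_sym // /update eqxx inE.
have : ((#|T|.-1)%:R <= #|T|%:R :> R)%R by rewrite ler_nat leq_pred.
have : (alpha * #|update s u [set v | v != u] u|%:R <= alpha * #|T|%:R)%R.
  by rewrite ler_wpM2l // ler_nat max_card.
lra.
Qed.

End AdmissibleCost.

Local Open Scope ring_scope.

Section NashEquilibria.
Variables (R : realFieldType) (T : finType) (d : T -> T -> nat) (alpha Z : R).
Hypotheses (metric_d : one_two_metric d) (alpha_gt0 : 0 < alpha).
Hypothesis Z_large : 2 * #|T|%:R + 1 + alpha * #|T|%:R <= Z.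
Variable s : T -> {set T}.
Hypothesis profile_s : is_profile s.

Let alpha_ge0 : 0 <= alpha. Proof. exact: ltW. Qed.

Let card_ge0 : 0 <= #|T|%:R :> R. Proof. exact: ler0n. Qed.

(* Below, [set n := #|T|%:R] identifies the convertible but syntactically
   different elaborations of [#|T|], which lra would treat as distinct atoms. *)

Let Z_above_admissible : 2 * #|T|%:R + alpha * #|T|%:R < Z.
Proof. by have := Z_large; set n : R := #|T|%:R; lra. Qed.

Let Z_above_complete : #|T|%:R + alpha * #|T|%:R < Z.
Proof. by have := Z_above_admissible; have := card_ge0; set n : R := #|T|%:R; lra. Qed.

Let Z_ge0 : 0 <= Z.
Proof.
have := Z_above_complete; have := mulr_ge0 alpha_ge0 card_ge0.
by have := card_ge0; set n : R := #|T|%:R; lra.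
Qed.

Lemma nash_no_penalty : nash_eq d alpha Z s ->
  forall u v, v != u -> stretch d Z s u v != Z.
Proof.
move=> nash u v vu; apply/eqP => penalty.
have := penalty_le_cost Z_ge0 alpha_ge0 vu penalty.
have := nash u [set w | w != u]; rewrite inE eqxx => /(_ isT).
have := cost_complete_le metric_d Z s u alpha_ge0; have := Z_above_complete.
by set n : R := #|T|%:R; lra.
Qed.

Lemma nash_unit_arcs : nash_eq d alpha Z s -> forall x w, d x w = 1%N -> w \in s x.
Proof.
move=> nash x w h; apply/negPn/negP => wN.
have wx : w != x by apply: contra_eq_neq h => ->; rewrite (dist_xx metric_d).
by move/eqP: (nash_no_penalty nash wx); rewrite (stretch_missing_unit_arc metric_d).
Qed.

Lemma nash_admissible : nash_eq d alpha Z s -> forall u, admissible d u (s u).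
Proof.
move=> nash u; apply/negPn/negP => inadm.
have unit_off : unit_arcs_off d s u by move=> x w _; apply: nash_unit_arcs.
have [v vu penalty] := inadmissible_penalty metric_d Z unit_off (profile_s u) inadm.
by move/eqP: (nash_no_penalty nash vu).
Qed.

Lemma cost_update_sub (N' : {set T}) u : (forall x w, d x w = 1%N -> w \in s x) ->
  admissible d u (s u) -> admissible d u N' ->
  cost d alpha Z (update s u N') u - cost d alpha Z s u =
  balance d alpha (update s u N') u - balance d alpha s u.
Proof.
move=> unit_s adm adm'.
have unit_off : unit_arcs_off d s u by move=> x w _; apply: unit_s.
have adm_upd : admissible d u (update s u N' u) by rewrite /update eqxx.
rewrite (cost_admissible metric_d _ _ unit_off adm).
rewrite (cost_admissible metric_d _ _ (unit_arcs_off_update _ unit_s) adm_upd).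
by ring.
Qed.

(* A one-element change moves |W_2(u)| by at most one, while W_{1->1}(u) does
   not depend on the non-unit arcs of u; so lowering |W_2^+(u)| strictly
   lowers the balance, by 1/2 or by alpha. *)
Lemma balance_min_one_change u (N' : {set T}) :
  (forall x w, d x w = 1%N -> w \in s x) -> admissible d u (s u) ->
  balance d alpha s u <= balance d alpha (update s u N') u ->
  one_change (s u) N' -> admissible d u N' ->
  ~ (#|[set v in N' | d u v == 2%N] :&: W11 d s u| < #|W2plus d s u|)%N.
Proof.
move=> unit_s adm balance_min change adm' lt.
have unit_off : unit_arcs_off d s u by move=> x w _; apply: unit_s.
have [_ unit_u _] := admissible_inv adm; have [_ unit_u' _] := admissible_inv adm'.
have same_W11 : W11 d (update s u N') u = W11 d s u.
  rewrite (W11_two_unit_hops metric_d (unit_arcs_off_update _ unit_s)) /update ?eqxx //.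
  by rewrite (W11_two_unit_hops metric_d unit_off).
move: balance_min lt; rewrite /balance /W2plus same_W11 /W2 /update eqxx.
have [card_le card_ge] := one_change_card change.
move: card_le card_ge; rewrite (card_admissible metric_d adm') (card_admissible metric_d adm).
set w2 := #|[set v in s u | d u v == 2%N]|; set w2' := #|[set v in N' | d u v == 2%N]|.
set p := #|[set v in s u | d u v == 2%N] :&: W11 d s u|.
set p' := #|[set v in N' | d u v == 2%N] :&: W11 d s u|.
move=> card_le card_ge balance_min lt.
have : p'%:R + 1 <= p%:R :> R by rewrite natr1 ler_nat.
have := alpha_gt0; move: balance_min.
have [-> | ->] : (w2 = w2' \/ w2 = w2'.+1)%N by lia.
  by lra.
by rewrite -[w2'.+1]addn1 natrD; lra.
Qed.

Lemma nash_BDSG : nash_eq d alpha Z s -> BDSG d alpha s.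
Proof.
move=> nash; have unit_s := nash_unit_arcs nash; have adm := nash_admissible nash.
have balance_min u N' : admissible d u N' ->
    balance d alpha s u <= balance d alpha (update s u N') u.
  move=> adm'; have [uN' _ _] := and3P adm'.
  by have := cost_update_sub unit_s (adm u) adm'; have := nash u N' uN'; lra.
split=> //; split=> // [u | u N' change adm']; first by case/and3P: (adm u).
exact: balance_min_one_change (balance_min u N' adm') change adm'.
Qed.

Lemma BDSG_nash : BDSG d alpha s -> nash_eq d alpha Z s.
Proof.
case=> [[unit_s dom _] balance_min] u S uS.
have unit_off : unit_arcs_off d s u by move=> x w _; apply: unit_s.
have adm : admissible d u (s u).
  by apply/and3P; split => //; apply/forallP => v; apply/implyP => /eqP /unit_s.
case adm' : (admissible d u S).
  by have := cost_update_sub unit_s adm adm'; have := balance_min u S adm'; lra.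
have uS' : u \notin update s u S u by rewrite /update eqxx.
have inadm : ~~ admissible d u (update s u S u) by rewrite /update eqxx adm'.
have [v vu penalty] :=
  inadmissible_penalty metric_d Z (unit_arcs_off_update S unit_s) uS' inadm.
have := penalty_le_cost Z_ge0 alpha_ge0 vu penalty.
have := cost_admissible_le metric_d Z alpha_ge0 unit_off adm.
by have := Z_above_admissible; set n : R := #|T|%:R; lra.
Qed.

End NashEquilibria.

Theorem theorem2p7 (R : realFieldType) (T : finType) (d : T -> T -> nat)
    (alpha : R) :
  one_two_metric d -> 0 < alpha ->
  exists Z0 : R, forall Z : R, Z0 <= Z ->
    forall s : T -> {set T}, is_profile s ->
      (nash_eq d alpha Z s <-> BDSG d alpha s).
Proof.
move=> metric_d alpha_gt0; exists (2 * #|T|%:R + 1 + alpha * #|T|%:R).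
move=> Z Z_large s profile_s; split.
- exact: nash_BDSG.
- exact: BDSG_nash.
Qed.
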